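(* Consider a two-player zero-sum matrix game with action sets $\mathcal{A}=\{1,\dots,m\}$ and $\mathcal{B}=\{1,\dots,n\}$, a known feature map $\phi:\mathcal{A}\times\mathcal{B}\to\mathbb{R}^d$ with $\|\phi(a,b)\|_2\le L$ for all $(a,b)$, and an unknown parameter $\theta^*\in\mathbb{R}^d$ with $\|\theta^*\|_2=1$, so that the payoff matrix is $Q(a,b)=\langle\phi(a,b),\theta^*\rangle$. Let $\tau^*>0$ and let $(\mu^*,\nu^* )$ be the quantal response equilibrium (QRE) of this game at temperature $\tau^*$. Write $X^*=X(\mu^*,\nu^* )$ and $y^*=y(\mu^*,\nu^* )$. Then the pair $(\theta^*,\tau^* )$ is uniquely identifiable from $(\mu^*,\nu^* )$, i.e. it is the unique pair $(\theta,\tau)\in\mathbb{R}^d\times(0,\infty)$ with $\|\theta\|_2=1$ and $X^*\theta=\tau y^*$, if and only if both of the following hold: (1) (Rank condition) $\operatorname{rank}(X^* )=d$; (2) (Non-uniformity condition) $y^*\neq 0$.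
   Context: For $\tau>0$ and a payoff matrix $Q\in\mathbb{R}^{m\times n}$, the entropy-regularized game is $\max_{\mu\in\Delta(\mathcal{A})}\min_{\nu\in\Delta(\mathcal{B})}\{\mu^\top Q\nu+\tau\mathcal{H}(\mu)-\tau\mathcal{H}(\nu)\}$ with Shannon entropy $\mathcal{H}(\pi)=-\sum_i\pi_i\log\pi_i$; its unique solution $(\mu^*,\nu^* )$ is the QRE, characterized by $\mu^*(a)\propto\exp(Q(a,\cdot)\nu^*/\tau)$ and $\nu^*(b)\propto\exp(-Q(\cdot,b)^\top\mu^*/\tau)$. For full-support distributions $\mu\in\Delta(\mathcal{A}),\nu\in\Delta(\mathcal{B})$ define $A(\nu)\in\mathbb{R}^{(m-1)\times d}$ with row $a-1$ (for $a=2,\dots,m$) equal to $\sum_{b'\in\mathcal{B}}\nu(b')(\phi(a,b')-\phi(1,b'))^\top$; $B(\mu)\in\mathbb{R}^{(n-1)\times d}$ with row $b-1$ (for $b=2,\dots,n$) equal to $\sum_{a'\in\mathcal{A}}\mu(a')(\phi(a',1)-\phi(a',b))^\top$; $c(\mu)\in\mathbb{R}^{m-1}$ with $c(\mu)_{a-1}=\log(\mu(a)/\mu(1))$; $d(\nu)\in\mathbb{R}^{n-1}$ with $d(\nu)_{b-1}=\log(\nu(b)/\nu(1))$. Set $X(\mu,\nu)=[A(\nu)^\top,B(\mu)^\top]^\top\in\mathbb{R}^{(m+n-2)\times d}$ and $y(\mu,\nu)=[c(\mu)^\top,d(\nu)^\top]^\top\in\mathbb{R}^{m+n-2}$. The QRE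 satisfies $X(\mu^*,\nu^* )\theta^*=\tau^*y(\mu^*,\nu^* )$. *)

From HB Require Import structures.
From mathcomp Require Import all_boot all_order all_algebra.
From mathcomp Require Import reals exp.
Set Implicit Arguments. Unset Strict Implicit. Unset Printing Implicit Defensive.
Import Order.TTheory GRing.Theory Num.Theory.
Local Open Scope ring_scope.

(* Actions: A = 'I_m (action a+1 of the paper = ordinal a), B = 'I_n.
   Rows of A(nu) are indexed by i : 'I_m.-1, standing for action i+2 of the
   paper, i.e. ordinal i.+1; "action 1" of the paper is ordinal 0. *)

Lemma succ_ord_lt (m : nat) (i : 'I_m.-1) : (i.+1 < m)%N.
Proof. by case: m i => [|m] [i hi]. Qed.

Lemma zero_ord_lt (m : nat) (i : 'I_m.-1) : (0 < m)%N.
Proof. by case: m i => [|m] [i hi]. Qed.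

Definition succ_act (m : nat) (i : 'I_m.-1) : 'I_m := Ordinal (succ_ord_lt i).
(* the reference action "1" (paper indexing) = ordinal 0 (exists since a row exists) *)
Definition first_act (m : nat) (i : 'I_m.-1) : 'I_m := Ordinal (zero_ord_lt i).

Section Defs.
Variable R : realType.

Definition norm2 (d : nat) (v : 'cV[R]_d) : R := Num.sqrt (\sum_(k < d) v k 0 ^+ 2).

Definition in_simplex (k : nat) (p : 'I_k -> R) : Prop :=
  (forall i, 0 <= p i) /\ \sum_(i < k) p i = 1.

Definition entropy (k : nat) (p : 'I_k -> R) : R := - \sum_(i < k) p i * ln (p i).

Definition payoff (m n d : nat) (phi : 'I_m -> 'I_n -> 'cV[R]_d) (theta : 'cV[R]_d)
  (a : 'I_m) (b : 'I_n) : R := \sum_(k < d) phi a b k 0 * theta k 0.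

Definition reg_obj (m n : nat) (Q : 'I_m -> 'I_n -> R) (tau : R)
  (mu : 'I_m -> R) (nu : 'I_n -> R) : R :=
  \sum_(a < m) \sum_(b < n) mu a * Q a b * nu b + tau * entropy mu - tau * entropy nu.

Definition is_QRE (m n : nat) (Q : 'I_m -> 'I_n -> R) (tau : R)
  (mu : 'I_m -> R) (nu : 'I_n -> R) : Prop :=
  [/\ in_simplex mu, in_simplex nu,
      (forall mu', in_simplex mu' -> reg_obj Q tau mu' nu <= reg_obj Q tau mu nu) &
      (forall nu', in_simplex nu' -> reg_obj Q tau mu nu <= reg_obj Q tau mu nu')].

Definition Amat (m n d : nat) (phi : 'I_m -> 'I_n -> 'cV[R]_d) (nu : 'I_n -> R)
  : 'M[R]_(m.-1, d) :=
  \matrix_(i < m.-1, k < d)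
    \sum_(b < n) nu b * (phi (succ_act i) b k 0 - phi (first_act i) b k 0).

Definition Bmat (m n d : nat) (phi : 'I_m -> 'I_n -> 'cV[R]_d) (mu : 'I_m -> R)
  : 'M[R]_(n.-1, d) :=
  \matrix_(j < n.-1, k < d)
    \sum_(a < m) mu a * (phi a (first_act j) k 0 - phi a (succ_act j) k 0).

Definition cvec (m : nat) (mu : 'I_m -> R) : 'cV[R]_(m.-1) :=
  \col_(i < m.-1) ln (mu (succ_act i) / mu (first_act i)).

Definition Xmat (m n d : nat) (phi : 'I_m -> 'I_n -> 'cV[R]_d)
  (mu : 'I_m -> R) (nu : 'I_n -> R) : 'M[R]_(m.-1 + n.-1, d) :=
  col_mx (Amat phi nu) (Bmat phi mu).

Definition yvec (m n : nat) (mu : 'I_m -> R) (nu : 'I_n -> R) : 'cV[R]_(m.-1 + n.-1) :=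
  col_mx (cvec mu) (cvec nu).

End Defs.

(** Each player's QRE strategy maximizes a linear payoff plus [tau] times the
    entropy, and by Gibbs' variational principle (a consequence of
    [ln x <= x - 1]) the maximizer is the softmax of the payoff divided by
    [tau]; log-ratios against the first action then give [X* theta* = tau* y*].
    Identifiability is linear algebra: the pairs [(theta, tau)] with a unit
    [theta] and [tau > 0] solving [X* theta = tau y*] correspond to the nonzero
    solutions [w = theta / tau] of [X* w = y*].  These are unique iff [X*] has
    a trivial kernel (otherwise [w + v] or [w - v] is another one) and
    [y* <> 0] (otherwise [w] itself lies in the kernel).  Given
    [X* theta* = tau* y*], the rank condition alone already implies the
    uniqueness. *)

From HB Require Import structures.
From mathcomp Require Import all_boot all_order all_algebra.
From mathcomp Require Import reals exp sequences.
From mathcomp Require Import ring lra.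
Set Implicit Arguments. Unset Strict Implicit. Unset Printing Implicit Defensive.
Import Order.TTheory GRing.Theory Num.Theory.
Local Open Scope ring_scope.

Lemma ln_ratio_leif (R : realType) (p q : R) : 0 <= p -> 0 < q ->
  p * (ln q - ln p) <= q - p ?= iff (p == q).
Proof.
move=> p_ge0 q_gt0; apply/leifP.
have [-> | pq] := eqVneq p q; first by rewrite !subrr mulr0.
have [-> | p_neq0] := eqVneq p 0; first by rewrite mul0r subr0.
have p_gt0 : 0 < p by rewrite lt_def p_neq0.
have qp_gt0 : 0 < q / p by rewrite divr_gt0.
have ln_neq0 : ln (q / p) != 0.
  apply: contra_neq pq => /eqP; rewrite ln_eq0 // => /eqP qp1.
  by rewrite -[q](divfK p_neq0) qp1 mul1r.
have -> : q - p = p * (expR (ln (q / p)) - 1).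
  by rewrite lnK ?posrE //; field; rewrite gt_eqF.
rewrite -ln_div ?posrE // ltr_pM2l //.
by have := expR_gt1Dx ln_neq0; lra.
Qed.

Section Gibbs.
Variables (R : realType) (k : nat) (g : 'I_k -> R) (tau : R).
Hypothesis tau_gt0 : 0 < tau.

Definition entropic_value (p : 'I_k -> R) : R := \sum_a p a * g a + tau * entropy p.

Definition softmax (a : 'I_k) : R := expR (g a / tau) / \sum_b expR (g b / tau).

Lemma partition_gt0 (i0 : 'I_k) : 0 < \sum_b expR (g b / tau).
Proof.
rewrite (bigD1 i0) //= ltr_pwDl ?expR_gt0 //.
by apply: sumr_ge0 => b _; exact: expR_ge0.
Qed.

Lemma softmax_gt0 (i : 'I_k) : 0 < softmax i.
Proof. by rewrite divr_gt0 ?expR_gt0 ?partition_gt0. Qed.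

Lemma sum_softmax (i0 : 'I_k) : \sum_a softmax a = 1.
Proof. by rewrite -mulr_suml divff // gt_eqF ?partition_gt0. Qed.

Lemma ln_softmax (i : 'I_k) : ln (softmax i) = g i / tau - ln (\sum_b expR (g b / tau)).
Proof. by rewrite ln_div ?posrE ?expR_gt0 ?partition_gt0 // expRK. Qed.

Lemma softmax_log_ratio (i j : 'I_k) : tau * ln (softmax i / softmax j) = g i - g j.
Proof.
rewrite ln_div ?posrE ?softmax_gt0 // !ln_softmax.
by field; rewrite gt_eqF.
Qed.

(* The last sum is minus the Kullback-Leibler divergence of [p] from [softmax]. *)
Lemma entropic_valueE (p : 'I_k -> R) : \sum_a p a = 1 ->
  entropic_value p = tau * ln (\sum_b expR (g b / tau))
                     + tau * \sum_a p a * (ln (softmax a) - ln (p a)).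
Proof.
move=> p1; rewrite /entropic_value /entropy.
under [X in _ = _ + tau * X]eq_bigr => a _ do rewrite ln_softmax !mulrBr.
rewrite !sumrB -mulr_suml p1 mul1r.
under [X in _ = _ + tau * (X - _ - _)]eq_bigr => a _ do rewrite mulrA.
by rewrite -mulr_suml; field; rewrite gt_eqF.
Qed.

Lemma softmax_unique_maximizer (p : 'I_k -> R) : in_simplex p ->
  (forall p', in_simplex p' -> entropic_value p' <= entropic_value p) ->
  forall a, p a = softmax a.
Proof.
move=> [p_ge0 p1] p_max a.
have softmax_simplex : in_simplex softmax.
  by split=> [b|]; [exact/ltW/softmax_gt0 | exact: sum_softmax a].
have gap_ge0 : 0 <= \sum_b p b * (ln (softmax b) - ln (p b)).
  move: (p_max _ softmax_simplex).
  rewrite !entropic_valueE ?(sum_softmax a) // [X in _ + tau * X <= _]big1 => [|b _];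
    last by rewrite subrr mulr0.
  by rewrite mulr0 addr0 lerDl pmulr_rge0.
have gap_leif := leif_sum (fun b (_ : true) => ln_ratio_leif (p_ge0 b) (softmax_gt0 b)).
rewrite sumrB p1 (sum_softmax a) subrr in gap_leif.
have /forallP/(_ a)/eqP // : [forall (b | true), p b == softmax b].
by rewrite -(eq_leif gap_leif) eq_le gap_ge0 (leif_le gap_leif).
Qed.

End Gibbs.

Section QRE.
Variables (R : realType) (m n : nat) (Q : 'I_m -> 'I_n -> R) (tau : R).
Variables (mu : 'I_m -> R) (nu : 'I_n -> R).
Hypotheses (tau_gt0 : 0 < tau) (mu_nu_QRE : is_QRE Q tau mu nu).

Lemma reg_obj_row (mu' : 'I_m -> R) : reg_obj Q tau mu' nu =
  entropic_value (fun a => \sum_b Q a b * nu b) tau mu' - tau * entropy nu.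
Proof.
rewrite /reg_obj /entropic_value; congr (_ + _ - _); apply: eq_bigr => a _.
by rewrite mulr_sumr; apply: eq_bigr => b _; rewrite mulrA.
Qed.

Lemma reg_obj_col (nu' : 'I_n -> R) : reg_obj Q tau mu nu' =
  tau * entropy mu - entropic_value (fun b => - \sum_a mu a * Q a b) tau nu'.
Proof.
rewrite /reg_obj /entropic_value exchange_big /=.
under [X in _ = _ - (X + _)]eq_bigr => b _ do rewrite mulrN mulr_sumr.
rewrite sumrN; under [X in _ = _ - (- X + _)]eq_bigr => b _ do
  under eq_bigr => a _ do rewrite mulrC.
by rewrite opprD opprK addrAC addrC.
Qed.

Lemma QRE_row_log_ratio (i j : 'I_m) :
  tau * ln (mu i / mu j) = \sum_b (Q i b - Q j b) * nu b.
Proof.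
have [mu_simplex _ mu_max _] := mu_nu_QRE.
have mu_softmax a : mu a = softmax (fun a => \sum_b Q a b * nu b) tau a.
  apply: (softmax_unique_maximizer tau_gt0 mu_simplex) => mu' /mu_max.
  by rewrite !reg_obj_row lerD2r.
by rewrite !mu_softmax softmax_log_ratio // -sumrB; apply: eq_bigr => b _; rewrite mulrBl.
Qed.

Lemma QRE_col_log_ratio (i j : 'I_n) :
  tau * ln (nu i / nu j) = \sum_a mu a * (Q a j - Q a i).
Proof.
have [_ nu_simplex _ nu_min] := mu_nu_QRE.
have nu_softmax b : nu b = softmax (fun b => - \sum_a mu a * Q a b) tau b.
  apply: (softmax_unique_maximizer tau_gt0 nu_simplex) => nu' /nu_min.
  by rewrite !reg_obj_col lerD2l lerN2.
rewrite !nu_softmax softmax_log_ratio // opprK addrC -sumrB.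
by apply: eq_bigr => a _; rewrite mulrBr.
Qed.

End QRE.

Section LinearModel.
Variables (R : realType) (m n d : nat) (phi : 'I_m -> 'I_n -> 'cV[R]_d).
Variables (theta : 'cV[R]_d) (mu : 'I_m -> R) (nu : 'I_n -> R).

Lemma Amat_mulmx (i : 'I_m.-1) : (Amat phi nu *m theta) i 0 =
  \sum_b (payoff phi theta (succ_act i) b - payoff phi theta (first_act i) b) * nu b.
Proof.
rewrite !mxE; under eq_bigr => k _ do rewrite mxE mulr_suml.
rewrite exchange_big /=; apply: eq_bigr => b _.
by rewrite /payoff -sumrB mulr_suml; apply: eq_bigr => k _; ring.
Qed.

Lemma Bmat_mulmx (j : 'I_n.-1) : (Bmat phi mu *m theta) j 0 =
  \sum_a mu a * (payoff phi theta a (first_act j) - payoff phi theta a (succ_act j)).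
Proof.
rewrite !mxE; under eq_bigr => k _ do rewrite mxE mulr_suml.
rewrite exchange_big /=; apply: eq_bigr => a _.
by rewrite /payoff -sumrB mulr_sumr; apply: eq_bigr => k _; ring.
Qed.

Lemma QRE_linear_system (tau : R) : 0 < tau ->
  is_QRE (payoff phi theta) tau mu nu -> Xmat phi mu nu *m theta = tau *: yvec mu nu.
Proof.
move=> tau_gt0 QRE; rewrite mul_col_mx scale_col_mx.
congr col_mx; apply/matrixP => i j; rewrite ord1.
- by rewrite Amat_mulmx !mxE (QRE_row_log_ratio tau_gt0 QRE).
- by rewrite Bmat_mulmx !mxE (QRE_col_log_ratio tau_gt0 QRE).
Qed.

End LinearModel.

Lemma row_fullPn (F : fieldType) (r d : nat) (X : 'M[F]_(r, d)) :
  ~~ row_full X -> exists2 v : 'cV_d, v != 0 & X *m v = 0.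
Proof.
move=> X_not_full; have : kermx X^T != 0 by rewrite kermx_eq0 /row_free mxrank_tr.
case/rowV0Pn => u /sub_kermxP uX u_neq0; exists u^T; first by rewrite trmx_eq0.
by rewrite -[X]trmxK -trmx_mul uX trmx0.
Qed.

(* Adding a kernel vector [v] or [-v] to [w0] gives another solution, and one
   of the two is nonzero because their sum [2 w0] is. *)
Lemma unique_nonzero_solution_row_full (F : numFieldType) (r d : nat)
    (X : 'M[F]_(r, d)) (y : 'cV_r) (w0 : 'cV_d) :
    w0 != 0 -> X *m w0 = y -> (forall w, w != 0 -> X *m w = y -> w = w0) ->
  row_full X /\ y != 0.
Proof.
move=> w0_neq0 Xw0 w0_unique.
have ker_X0 (v : 'cV_d) : X *m v = 0 -> v = 0.
  move=> Xv; have solD : X *m (w0 + v) = y by rewrite mulmxDr Xv addr0.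
  have solB : X *m (w0 - v) = y by rewrite mulmxBr Xv subr0.
  have : (w0 + v != 0) || (w0 - v != 0).
    rewrite -negb_and; apply: contra w0_neq0 => /andP[/eqP wDv /eqP wBv].
    have : 2%:R *: w0 = (w0 + v) + (w0 - v).
      by rewrite scaler_nat mulr2n addrACA subrr addr0.
    by rewrite wDv wBv addr0 => /eqP; rewrite scaler_eq0 pnatr_eq0.
  case/orP => [/w0_unique/(_ solD) | /w0_unique/(_ solB)] /eqP;
    by rewrite -subr_eq0 addrC addKr ?oppr_eq0 => /eqP.
split.
  apply: contraT => /row_fullPn[v v_neq0 /ker_X0 v0].
  by rewrite v0 eqxx in v_neq0.
by apply: contra_neq w0_neq0 => y0; apply: ker_X0; rewrite Xw0.
Qed.

Section Norm2.
Variables (R : realType) (d : nat).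

Lemma norm2_eq0 (v : 'cV[R]_d) : (norm2 v == 0) = (v == 0).
Proof.
rewrite /norm2 sqrtr_eq0; apply/idP/eqP => [sum_le0 | ->]; last first.
  by rewrite big1 // => k _; rewrite mxE expr0n.
have sum_eq0 : \sum_(k < d) v k 0 ^+ 2 = 0.
  by apply/eqP; rewrite eq_le sum_le0 sumr_ge0 // => k _; exact: sqr_ge0.
apply/matrixP => k j; rewrite ord1 mxE; apply/eqP; rewrite -sqrf_eq0; apply/eqP.
by apply: (psumr_eq0P _ sum_eq0) => // i _; exact: sqr_ge0.
Qed.

Lemma norm2_gt0 (v : 'cV[R]_d) : v != 0 -> 0 < norm2 v.
Proof. by rewrite -norm2_eq0 lt_def => ->; exact: sqrtr_ge0. Qed.

Lemma norm2Z (a : R) (v : 'cV[R]_d) : norm2 (a *: v) = `|a| * norm2 v.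
Proof.
rewrite /norm2 -sqrtr_sqr -sqrtrM ?sqr_ge0 // mulr_sumr.
by congr Num.sqrt; apply: eq_bigr => k _; rewrite mxE exprMn.
Qed.

End Norm2.

Definition identifiable (R : realType) (r d : nat) (X : 'M[R]_(r, d)) (y : 'cV[R]_r)
    (theta_s : 'cV[R]_d) (tau_s : R) : Prop :=
  forall (theta : 'cV[R]_d) (tau : R), 0 < tau -> norm2 theta = 1 ->
    X *m theta = tau *: y -> theta = theta_s /\ tau = tau_s.

Section Identifiability.
Variables (R : realType) (r d : nat) (X : 'M[R]_(r, d)) (y : 'cV[R]_r).
Variables (theta_s : 'cV[R]_d) (tau_s : R).
Hypotheses (tau_s_gt0 : 0 < tau_s) (theta_s_unit : norm2 theta_s = 1).
Hypothesis X_theta_s : X *m theta_s = tau_s *: y.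

Lemma row_full_identifiable : row_full X -> identifiable X y theta_s tau_s.
Proof.
move=> X_full theta tau tau_gt0 theta_unit X_theta.
have e : tau_s *: theta = tau *: theta_s.
  by apply: (row_full_inj X_full); rewrite -!scalemxAr X_theta X_theta_s !scalerA mulrC.
have tauE : tau = tau_s.
  by move: (congr1 (@norm2 R d) e); rewrite !norm2Z theta_unit theta_s_unit !gtr0_norm // !mulr1 => ->.
by split=> //; apply: (scalerI (lt0r_neq0 tau_s_gt0)); rewrite e tauE.
Qed.

(* A nonzero solution [w] of [X w = y] normalizes to the candidate [(w / |w|, 1 / |w|)]. *)
Lemma identifiable_nonzero_solution_unique : identifiable X y theta_s tau_s ->
  forall w, w != 0 -> X *m w = y -> w = tau_s^-1 *: theta_s.
Proof.
move=> X_ident w w_neq0 X_w; have w_gt0 := norm2_gt0 w_neq0.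
have [] : (norm2 w)^-1 *: w = theta_s /\ (norm2 w)^-1 = tau_s.
  apply: X_ident; first by rewrite invr_gt0.
    by rewrite norm2Z gtr0_norm ?invr_gt0 // mulVf ?gt_eqF.
  by rewrite -scalemxAr X_w.
by move=> <- <-; rewrite invrK scalerA mulfV ?gt_eqF // scale1r.
Qed.

Lemma identifiable_row_full : identifiable X y theta_s tau_s -> row_full X /\ y != 0.
Proof.
move=> X_ident; apply: (unique_nonzero_solution_row_full (w0 := tau_s^-1 *: theta_s)).
- by rewrite scaler_eq0 invr_eq0 gt_eqF //= -norm2_eq0 theta_s_unit oner_eq0.
- by rewrite -scalemxAr X_theta_s scalerA mulVf ?gt_eqF // scale1r.
- exact: identifiable_nonzero_solution_unique.
Qed.

End Identifiability.

Theorem theorem1 (R : realType) (m n d : nat)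
  (phi : 'I_m -> 'I_n -> 'cV[R]_d) (L : R)
  (hL : forall a b, norm2 (phi a b) <= L)
  (theta_s : 'cV[R]_d) (htheta : norm2 theta_s = 1)
  (tau_s : R) (htau : 0 < tau_s)
  (mu_s : 'I_m -> R) (nu_s : 'I_n -> R)
  (hQRE : is_QRE (payoff phi theta_s) tau_s mu_s nu_s) :
  (Xmat phi mu_s nu_s *m theta_s = tau_s *: yvec mu_s nu_s /\
   forall (theta : 'cV[R]_d) (tau : R), 0 < tau -> norm2 theta = 1 ->
     Xmat phi mu_s nu_s *m theta = tau *: yvec mu_s nu_s ->
     theta = theta_s /\ tau = tau_s)
  <->
  (\rank (Xmat phi mu_s nu_s) = d /\ yvec mu_s nu_s != 0).
Proof.
have X_theta_s := QRE_linear_system htau hQRE.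
split=> [[_ X_ident] | [/eqP X_full _]].
  by have [/eqP] := identifiable_row_full htau htheta X_theta_s X_ident.
by split=> //; exact: row_full_identifiable.
Qed.
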